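(* Let $d\ge1$ and $K\ge d+2$. Then for every $\mathbf W\in\mathrm{OB}(d,K)$ we have $\rho_{\text{one-vs-rest}}(\mathbf W)\le 1$, and equality holds only if $\mathbf 0\in\operatorname{conv}\{\mathbf w_1,\dots,\mathbf w_K\}$.
   Context: $\mathrm{OB}(d,K)$ is the set of real $d\times K$ matrices with unit-norm columns $\mathbf w_1,\dots,\mathbf w_K$. For a point $\mathbf v$ and finite set $\mathcal W$, $\operatorname{dist}(\mathbf v,\mathcal W)=\inf\{\|\mathbf v-\mathbf w\|_2:\mathbf w\in\operatorname{conv}(\mathcal W)\}$. $\rho_{\text{one-vs-rest}}(\mathbf W)=\min_{k}\operatorname{dist}(\mathbf w_k,\{\mathbf w_j\}_{j\ne k})$. *)

From mathcomp Require Import all_boot all_order all_algebra.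
From mathcomp Require Import boolp classical_sets reals.
Set Implicit Arguments. Unset Strict Implicit. Unset Printing Implicit Defensive.
Import Order.TTheory GRing.Theory Num.Theory.
Local Open Scope ring_scope.
Local Open Scope classical_set_scope.

Definition enorm (R : realType) (d : nat) (v : 'cV[R]_d) : R :=
  Num.sqrt (\sum_(i < d) v i 0 ^+ 2).

Definition OB (R : realType) (d K : nat) (W : 'M[R]_(d, K)) : Prop :=
  forall k : 'I_K, enorm (col k W) = 1.

Definition conv_cols (R : realType) (d K : nat) (W : 'M[R]_(d, K))
    (P : pred 'I_K) : set 'cV[R]_d :=
  [set x | exists lam : 'I_K -> R,
     (forall j, 0 <= lam j) /\ (forall j, ~~ P j -> lam j = 0) /\
     \sum_(j < K) lam j = 1 /\ x = \sum_(j < K) lam j *: col j W].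

Definition dist_conv (R : realType) (d K : nat) (v : 'cV[R]_d)
    (W : 'M[R]_(d, K)) (P : pred 'I_K) : R :=
  inf [set enorm (v - w) | w in conv_cols W P].

Definition rho_ovr (R : realType) (d K : nat) (W : 'M[R]_(d, K)) : R :=
  inf [set dist_conv (col k W) W (fun j => j != k) | k in [set: 'I_K]].

From mathcomp Require Import all_boot all_order all_algebra.
From mathcomp Require Import boolp classical_sets reals.
From mathcomp Require Import zify ring lra.
Import Order.TTheory GRing.Theory Num.Theory.
Local Open Scope ring_scope.
Local Open Scope classical_set_scope.
Set Implicit Arguments. Unset Strict Implicit. Unset Printing Implicit Defensive.

(** Since K >= d + 2, the columns are affinely dependent, so (Radon) there are
    convex weights lam and mu with disjoint supports and a common barycenter p.
    For unit vectors, sum_j lam_j |w_j - p|^2 = 1 - |p|^2, so some w_j with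
    lam_j > 0 satisfies |w_j - p|^2 <= 1 - |p|^2; as mu_j = 0, p lies in the
    hull of the other columns.  Hence rho <= sqrt (1 - |p|^2) <= 1, and
    rho = 1 forces p = 0, a point of the hull of all columns. *)

Definition convex_weights (R : numDomainType) (I : finType) (lam : I -> R) :=
  (forall i, 0 <= lam i) /\ \sum_i lam i = 1.

Lemma exists_le_weighted_mean (R : realDomainType) (I : finType) (lam f : I -> R) :
  convex_weights lam -> exists i, 0 < lam i /\ f i <= \sum_j lam j * f j.
Proof.
move=> [lam0 lam1].
have [i0 /andP[_ lam_i0]] : exists i, true && (0 < lam i).
  by apply: psumr_neq0P => [i _|]; [exact: lam0 | apply/eqP; rewrite lam1 oner_eq0].
case: (@arg_minP _ _ _ i0 (fun i => 0 < lam i) f lam_i0) => i lam_i f_min.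
exists i; split=> //.
rewrite -subr_ge0 -[f i]mul1r -lam1 mulr_suml -sumrB sumr_ge0 // => j _.
rewrite -mulrBr; have := lam0 j; rewrite le0r => /orP[/eqP-> | lam_j].
  by rewrite mul0r.
by rewrite mulr_ge0 ?lam0 // subr_ge0 f_min.
Qed.

Lemma convex_split_affine_dependence (R : realFieldType) (V : lmodType R)
    (I : finType) (a : I -> R) (v : I -> V) :
  (exists i, a i != 0) -> \sum_i a i = 0 -> \sum_i a i *: v i = 0 ->
  exists lam mu : I -> R, [/\ convex_weights lam, convex_weights mu,
    forall i, 0 < lam i -> mu i = 0 &
    \sum_i lam i *: v i = \sum_i mu i *: v i].
Proof.
move=> [i0 a_i0] suma sumav.
pose S := \sum_i `|a i|.
have S_gt0 : 0 < S.
  by rewrite /S (bigD1 i0) //= ltr_pwDl ?normr_gt0 ?sumr_ge0.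
exists (fun i => (`|a i| + a i) / S), (fun i => (`|a i| - a i) / S); split.
- split=> [i|]; last by rewrite -mulr_suml big_split /= suma addr0 divff ?gt_eqF.
  by rewrite divr_ge0 ?(ltW S_gt0) // -lerBlDr sub0r ler_normr lexx orbT.
- split=> [i|]; last by rewrite -mulr_suml sumrB suma subr0 divff ?gt_eqF.
  by rewrite divr_ge0 ?(ltW S_gt0) // subr_ge0 ler_norm.
- move=> i; have [a_ge0|a_lt0] := leP 0 (a i).
    by rewrite ger0_norm // subrr mul0r.
  by rewrite ltr0_norm // addNr mul0r ltxx.
- apply/eqP; rewrite -subr_eq0 -sumrB.
  rewrite (eq_bigr (fun i => (2 / S) *: (a i *: v i))) => [|i _].
    by rewrite -scaler_sumr sumav scaler0.
  by rewrite -scalerBl scalerA; congr (_ *: _); ring.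
Qed.

Lemma affine_dependence_cols (F : fieldType) (d K : nat) (W : 'M[F]_(d, K)) :
  (d + 2 <= K)%N ->
  exists2 a : 'I_K -> F, exists j, a j != 0 &
    \sum_j a j = 0 /\ \sum_j a j *: col j W = 0.
Proof.
move=> hK; pose A : 'M[F]_(K, d + 1) := row_mx W^T (const_mx 1).
have /rowV0Pn[u /sub_kermxP uA u_neq0] : kermx A != 0.
  by rewrite kermx_eq0 /row_free; apply: contraTneq (rank_leq_col A) => ->; lia.
move: uA; rewrite mul_mx_row -row_mx0 => /eq_row_mx[uW u1].
exists (u 0); last split.
- apply/existsP; apply: contraNT u_neq0; rewrite negb_exists => /forallP u0.
  apply/eqP/rowP => j.
  by rewrite mxE; apply/eqP; have := u0 j; rewrite negbK.
- transitivity ((u *m (const_mx 1 : 'M_(K, 1))) 0 0); last by rewrite u1 mxE.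
  by rewrite mxE; apply: eq_bigr => j _; rewrite mxE mulr1.
- apply/colP => i; rewrite summxE mxE.
  transitivity ((u *m W^T) 0 i); last by rewrite uW mxE.
  by rewrite mxE; apply: eq_bigr => j _; rewrite !mxE.
Qed.

Definition sqnorm (R : pzRingType) (d : nat) (v : 'cV[R]_d) : R :=
  \sum_(i < d) v i 0 ^+ 2.

Lemma enormE (R : realType) (d : nat) (v : 'cV[R]_d) :
  enorm v = Num.sqrt (sqnorm v).
Proof. by []. Qed.

Lemma sqnorm_ge0 (R : realDomainType) (d : nat) (v : 'cV[R]_d) : 0 <= sqnorm v.
Proof. by apply: sumr_ge0 => i _; rewrite sqr_ge0. Qed.

Lemma sqnorm_eq0 (R : realDomainType) (d : nat) (v : 'cV[R]_d) :
  (sqnorm v == 0) = (v == 0).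
Proof.
apply/eqP/eqP => [v0|->]; last by apply: big1 => i _; rewrite mxE expr0n.
apply/colP => i; rewrite mxE; apply/eqP; rewrite -sqrf_eq0; apply/eqP.
by apply: (psumr_eq0P _ v0) => // j _; rewrite sqr_ge0.
Qed.

Lemma weighted_sqr_dev (R : comPzRingType) (I : finType) (lam f : I -> R) :
  \sum_i lam i = 1 ->
  \sum_i lam i * (f i - \sum_j lam j * f j) ^+ 2 =
    \sum_i lam i * f i ^+ 2 - (\sum_j lam j * f j) ^+ 2.
Proof.
move=> lam1; set c := \sum_j lam j * f j.
rewrite (eq_bigr (fun i =>
  lam i * f i ^+ 2 - (c *+ 2 * (lam i * f i) - c ^+ 2 * lam i))).
  by rewrite !sumrB -!mulr_sumr lam1 -/c; ring.
by move=> i _; ring.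
Qed.

Lemma weighted_sqnorm_dev (R : comPzRingType) (d : nat) (I : finType)
    (lam : I -> R) (v : I -> 'cV[R]_d) :
  \sum_i lam i = 1 ->
  \sum_i lam i * sqnorm (v i - \sum_j lam j *: v j) =
    \sum_i lam i * sqnorm (v i) - sqnorm (\sum_j lam j *: v j).
Proof.
move=> lam1; rewrite /sqnorm.
under eq_bigr do rewrite mulr_sumr.
under [\sum_i lam i * _]eq_bigr do rewrite mulr_sumr.
rewrite exchange_big [X in _ = X - _]exchange_big /= -sumrB; apply: eq_bigr => k _.
have coord : (\sum_i lam i *: v i) k 0 = \sum_i lam i * v i k 0.
  by rewrite summxE; apply: eq_bigr => i _; rewrite mxE.
rewrite coord -weighted_sqr_dev //; apply: eq_bigr => i _.
by rewrite !mxE coord.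
Qed.

Lemma inf_ge0 (R : realType) (S : set R) : lbound S 0 -> 0 <= inf S.
Proof.
move=> S_ge0; have [[x Sx]|S0] := pselect (S !=set0).
  exact: lb_le_inf (ex_intro _ x Sx) S_ge0.
by rewrite (_ : S = set0) ?inf0 //; apply/seteqP; split=> x // Sx; apply: S0; exists x.
Qed.

Lemma dist_conv_ge0 (R : realType) (d K : nat) (v : 'cV[R]_d) (W : 'M[R]_(d, K)) P :
  0 <= dist_conv v W P.
Proof. by apply: inf_ge0 => _ [w _ <-]; exact: sqrtr_ge0. Qed.

Lemma dist_conv_le (R : realType) (d K : nat) (v w : 'cV[R]_d) (W : 'M[R]_(d, K)) P :
  conv_cols W P w -> dist_conv v W P <= enorm (v - w).
Proof.
by move=> Pw; apply: ge_inf; [exists 0 => _ [u _ <-]; exact: sqrtr_ge0 | exists w].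
Qed.

Lemma rho_ovr_le_dist (R : realType) (d K : nat) (W : 'M[R]_(d, K)) (j : 'I_K) :
  rho_ovr W <= dist_conv (col j W) W (fun i => i != j).
Proof.
by apply: ge_inf; [exists 0 => _ [k _ <-]; exact: dist_conv_ge0 | exists j].
Qed.

Lemma OB_sqnorm_col (R : realType) (d K : nat) (W : 'M[R]_(d, K)) (k : 'I_K) :
  OB W -> sqnorm (col k W) = 1.
Proof.
by move=> /(_ k); rewrite enormE => e; rewrite -(sqr_sqrtr (sqnorm_ge0 _)) e expr1n.
Qed.

Lemma OB_exists_col_close_to_conv_rest (R : realType) (d K : nat) (W : 'M[R]_(d, K)) :
  (d + 2 <= K)%N -> OB W ->
  exists j p, [/\ conv_cols W (fun i => i != j) p, conv_cols W predT p &
                  sqnorm (col j W - p) <= 1 - sqnorm p].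
Proof.
move=> hK hOB; have [a a_neq0 [suma sumav]] := affine_dependence_cols W hK.
have [lam [mu [[lam0 lam1] [mu0 mu1] lam_mu bary]]] :=
  convex_split_affine_dependence a_neq0 suma sumav.
set p := \sum_j lam j *: col j W.
have [j [lam_j dev_j]] :=
  exists_le_weighted_mean (fun i => sqnorm (col i W - p)) (conj lam0 lam1).
exists j, p; split.
- exists mu; split=> //; split; last by rewrite /p bary.
  by move=> i; rewrite negbK => /eqP ->; exact: lam_mu.
- by exists lam.
- move: dev_j; rewrite weighted_sqnorm_dev //.
  by under eq_bigr do rewrite OB_sqnorm_col // mulr1; rewrite lam1.
Qed.

Theorem mainTheorem5 (R : realType) (d K : nat) (W : 'M[R]_(d, K)) :
  (1 <= d)%N -> (d + 2 <= K)%N -> OB W ->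
  rho_ovr W <= 1 /\ (rho_ovr W = 1 -> conv_cols W predT 0).
Proof.
move=> _ hK hOB.
have [j [p [p_rest p_all dev_j]]] := OB_exists_col_close_to_conv_rest hK hOB.
have dev_ge0 : 0 <= 1 - sqnorm p := le_trans (sqnorm_ge0 _) dev_j.
have rho_le : rho_ovr W <= Num.sqrt (1 - sqnorm p).
  apply: le_trans (rho_ovr_le_dist W j) _.
  apply: le_trans (dist_conv_le _ p_rest) _.
  by rewrite enormE ler_sqrt.
split.
  apply: le_trans rho_le _.
  by rewrite -[X in _ <= X]sqrtr1 ler_sqrt // gerBl sqnorm_ge0.
move=> rho1; suff p0 : p = 0 by rewrite -p0.
apply/eqP; rewrite -sqnorm_eq0 eq_le sqnorm_ge0 andbT.
by move: rho_le; rewrite rho1 -{1}sqrtr1 ler_sqrt //; lra.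
Qed.
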